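(* Let $\mathcal{P}(3^3)$ be the graph whose vertices are the 280 partitions of $\{1,\ldots,9\}$ into three cells each of size three, two such partitions being adjacent if and only if each cell of one partition contains exactly one point from each cell of the other. Let $M$ be the $280\times 36$ $0/1$-matrix with rows indexed by these partitions and columns indexed by the 2-element subsets of $\{1,\ldots,9\}$, whose entry in row $\pi$ and column $\{i,j\}$ is $1$ if and only if $\{i,j\}$ is contained in a cell of $\pi$. If $x\in\mathbb{R}^{280}$ is the characteristic vector of an independent set of size $70$ in $\mathcal{P}(3^3)$, then $x$ lies in the column space of $M$. *)

From HB Require Import structures.
From mathcomp Require Import all_boot all_order all_algebra.
From mathcomp Require Import reals.
Set Implicit Arguments. Unset Strict Implicit. Unset Printing Implicit Defensive.
Import Order.TTheory GRing.Theory Num.Theory.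
Local Open Scope ring_scope.

(* The ground set {1,...,9} is represented by 'I_9 = {0,...,8}. *)

Definition is_part333 (P : {set {set 'I_9}}) : bool :=
  partition P [set: 'I_9] && [forall A in P, #|A| == 3].

Definition P333 := {P : {set {set 'I_9}} | is_part333 P}.

Definition adj333 (p q : P333) : bool :=
  [forall A in val p, forall B in val q, #|A :&: B| == 1].

Definition independent333 (S : {set P333}) : bool :=
  [forall p in S, forall q in S, ~~ adj333 p q].

Definition Pair9 := {A : {set 'I_9} | #|A| == 2}.

Definition Mpair (R : nzRingType) (p : P333) (e : Pair9) : R :=
  ([exists A in val p, val e \subset A] : bool)%:R.

Definition in_colspace (R : nzRingType) (x : P333 -> R) : Prop :=
  exists y : Pair9 -> R, forall p : P333, x p = \sum_(e : Pair9) Mpair R p e * y e.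

From HB Require Import structures.
From mathcomp Require Import all_boot all_order all_algebra.
From mathcomp Require Import reals.
From mathcomp Require Import zify ring.
Set Implicit Arguments. Unset Strict Implicit. Unset Printing Implicit Defensive.
Import Order.TTheory GRing.Theory Num.Theory.

(* Write G(p, q) for the number of pairs lying in a cell of both p and q, so
   that G = M M^T, and let x be the indicator of S.  A partition is handled
   through its pair profile (its row of M, as 36 booleans), which makes the graph
   and its 4-cliques computable.  Four pairwise adjacent partitions are the
   parallel classes of an affine plane of order 3: there are 840 such 4-cliques
   and every partition lies in 12 of them.  An independent set meets a clique at
   most once, so 70 * 12 = 840 forces S to meet every 4-clique exactly once.
   A computer-checked weighting w(p, K) of the 4-cliques, depending only on the
   sorted numbers G(p, m) for m in K, satisfies
   24 G(p, t) = 1680 [p = t] + sum_(K containing t) w(p, K) and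
   sum_K w(p, K) = 3360; summing over t in S gives G x = 70 x + 140.  As every
   row of M has 9 ones, x = M (M^T x / 70 - 2 / 9). *)

Lemma sum_nat_le1_eq_size (I : eqType) (r : seq I) (F : I -> nat) :
  {in r, forall i, F i <= 1} -> \sum_(i <- r) F i = size r -> {in r, forall i, F i = 1}.
Proof.
elim: r => //= i r IHr F_le1; rewrite big_cons => sumF j.
have leF : \sum_(j <- r) F j <= size r.
  rewrite -sum1_size big_seq_cond [X in _ <= X]big_seq_cond.
  by apply: leq_sum => k /andP[kr _]; apply: F_le1; rewrite inE kr orbT.
have Fi1 : F i <= 1 by apply: F_le1; rewrite mem_head.
rewrite inE => /predU1P[-> | jr]; first by lia.
by apply: IHr jr => [k kr|]; [apply: F_le1; rewrite inE kr orbT | lia].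
Qed.

Section BlockIncidence.
Variable T : eqType.

Lemma count_le1_pairwise (r : rel T) (a : pred T) (K : seq T) :
  (forall x y, r x y -> ~~ (a x && a y)) -> pairwise r K -> count a K <= 1.
Proof.
move=> indep; elim: K => //= x K IHK /andP[/allP rxK /IHK].
case ax: (a x) => //= _; rewrite add1n ltnS leqn0 eqn0Ngt -has_count.
by apply/hasPn => y /rxK /indep; rewrite ax.
Qed.

Lemma count_mem_swap (s1 s2 : seq T) :
  uniq s1 -> uniq s2 -> count (mem s1) s2 = count (mem s2) s1.
Proof.
move=> u1 u2; rewrite -!size_filter; apply/perm_size/uniq_perm; try exact: filter_uniq.
by move=> x; rewrite !mem_filter andbC.
Qed.

Variables (blocks : seq (seq T)) (s : seq T).

Lemma exchange_incidence_sum (R : nmodType) (F : seq T -> R) :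
  (\sum_(t <- s) \sum_(K <- blocks | t \in K) F K = \sum_(K <- blocks) F K *+ count (mem K) s)%R.
Proof.
rewrite (exchange_big_dep predT) //=; apply: eq_bigr => K _.
by rewrite big_const_seq iter_addr addr0.
Qed.

Lemma blocks_hit_once (c : nat) :
    {in blocks, forall K, count (mem K) s <= 1} ->
    {in s, forall t, count (fun K => t \in K) blocks = c} -> size blocks = c * size s ->
  {in blocks, forall K, count (mem K) s = 1}.
Proof.
move=> hit_le1 deg_c size_blocks; apply: sum_nat_le1_eq_size => //.
have := exchange_incidence_sum (fun=> 1%N).
have -> : \sum_(t <- s) \sum_(K <- blocks | t \in K) 1 = size blocks.
  rewrite (eq_big_seq (fun=> c)) => [|t /deg_c <-]; last by rewrite sum1_count.
  by rewrite big_const_seq iter_addn_0 count_predT size_blocks mulnC.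
by move=> ->; apply: eq_bigr => K _; rewrite natn.
Qed.

Local Open Scope ring_scope.

Lemma incidence_weight_sum (R : pzRingType) (p : T) (a b : R) (k : T -> R)
    (w : seq T -> R) : uniq s -> {in blocks, forall K, count (mem K) s = 1%N} ->
    {in s, forall t, a * k t = b *+ (p == t) + \sum_(K <- blocks | t \in K) w K} ->
  a * \sum_(t <- s) k t = b *+ (p \in s) + \sum_(K <- blocks) w K.
Proof.
move=> uniq_s hit1 kw; rewrite mulr_sumr (eq_big_seq _ kw) big_split /=.
rewrite sumrMnr exchange_incidence_sum (eq_big_seq _ (fun K BK => congr1 _ (hit1 K BK))).
congr (_ *+ _ + _); rewrite -count_uniq_mem // -sum1_count [RHS]big_mkcond.
by apply: eq_bigr => t _; rewrite /= eq_sym; case: (t == p).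
Qed.

End BlockIncidence.

(* The sequences l of length n with l_i <= i and l_(l_i) = l_i: set partitions
   of {0, ..., n - 1} with every point labelled by the least point of its cell. *)
Fixpoint min_labellings (n : nat) : seq (seq nat) :=
  if n is n'.+1 then
    [seq rcons l a | l <- min_labellings n', a <- n' :: [seq a <- iota 0 n' | nth 0 l a == a]]
  else [:: [::]].

Lemma mem_min_labellings (l : seq nat) :
    (forall i, i < size l -> nth 0 l i <= i /\ nth 0 l (nth 0 l i) = nth 0 l i) ->
  l \in min_labellings (size l).
Proof.
elim/last_ind: l => [|l a IHl] labl; first by rewrite inE.
have lt_size i : i < size l -> i < size (rcons l a) by rewrite size_rcons => /ltnW.
have [a_le a_fix] : nth 0 (rcons l a) (size l) <= size l /\
    nth 0 (rcons l a) (nth 0 (rcons l a) (size l)) = nth 0 (rcons l a) (size l).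
  by apply: labl; rewrite size_rcons.
rewrite !nth_rcons ltnn eqxx in a_le a_fix.
rewrite size_rcons; apply: (allpairs_f_dep (fun l a => rcons l a)).
  apply: IHl => i lti; have [] := labl i (lt_size i lti).
  by rewrite !nth_rcons lti => le_i; rewrite (leq_ltn_trans le_i lti).
rewrite inE mem_filter mem_iota /=.
case: (ltngtP a (size l)) a_le => // lt_a _.
by rewrite lt_a in a_fix; rewrite a_fix eqxx.
Qed.

Definition codes333 : seq (seq nat) :=
  [seq l <- min_labellings 9 | all (fun i => count_mem (nth 0 l i) l == 3) (iota 0 9)].

Lemma ordered_pair_set_inj n :
  {in [pred ij : 'I_n * 'I_n | ij.1 < ij.2] &, injective (fun ij => [set ij.1; ij.2])}.
Proof.
move=> [i j] [k l]; rewrite !inE /= => ltij ltkl eq_ij.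
have /set2P[] : i \in [set k; l] by rewrite -eq_ij set21.
all: have /set2P[] : j \in [set k; l] by rewrite -eq_ij set22.
all: move=> eq_j eq_i; rewrite eq_i eq_j ?ltnn // in ltij *.
by have := ltn_trans ltij ltkl; rewrite ltnn.
Qed.

Lemma sum_two_subsets n (F : {set 'I_n} -> nat) :
  \sum_(e : {A : {set 'I_n} | #|A| == 2}) F (val e) =
  \sum_(i < n) \sum_(j < n | i < j) F [set i; j].
Proof.
rewrite pair_big_dep -(big_sub [pred A : {set 'I_n} | #|A| == 2]) /=.
pose D := [set ij : 'I_n * 'I_n | ij.1 < ij.2].
rewrite (eq_bigl (fun A => A \in (fun ij => [set ij.1; ij.2]) @: D)); last first.
  move=> A /=; apply/idP/imsetP => [/cards2P[i [j [neq_ij ->]]]|[[i j]]].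
    case: (ltngtP i j) => [lt_ij|lt_ji|/val_inj eq_ij]; last by rewrite eq_ij eqxx in neq_ij.
      by exists (i, j); rewrite ?inE.
    by exists (j, i); rewrite ?inE //= setUC.
  by rewrite inE /= => /ltn_eqF lt_ij ->; rewrite inE cards2 -val_eqE /= lt_ij.
rewrite big_imset; first by apply: eq_bigl => ij; rewrite inE.
by move=> ij kl; rewrite !inE; apply: ordered_pair_set_inj.
Qed.

Definition pairs9 : seq (nat * nat) :=
  [seq ij <- [seq (i, j) | i <- iota 0 9, j <- iota 0 9] | ij.1 < ij.2].

Lemma sum_Pair9 (F : {set 'I_9} -> nat) :
  \sum_(e : Pair9) F (val e) = \sum_(ij <- pairs9) F [set inord ij.1; inord ij.2].
Proof.
rewrite sum_two_subsets /pairs9 big_filter [RHS]big_mkcond big_allpairs_dep.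
change (iota 0 9) with (index_iota 0 9); rewrite big_mkord.
apply: eq_bigr => i _; rewrite big_mkord big_mkcond.
by apply: eq_bigr => j _; rewrite !inord_val.
Qed.

Definition profile_of_code (l : seq nat) : seq bool :=
  [seq nth 0 l ij.1 == nth 0 l ij.2 | ij <- pairs9].

Lemma count_enum_ord n (a : pred 'I_n) : count a (enum 'I_n) = #|a|.
Proof. by rewrite -size_filter cardE enumT. Qed.

Section Partition.
Variable p : P333.
Local Notation P := (val p).

Lemma trivIset_cells : trivIset P.
Proof. by case/andP: (valP p) => /and3P[]. Qed.

Lemma mem_cover_cells x : x \in cover P.
Proof. by case/andP: (valP p) => /and3P[/eqP-> _ _] _; rewrite inE. Qed.

Lemma card_cell A : A \in P -> #|A| = 3.
Proof. by case/andP: (valP p) => _ /forallP cardP AP; have /implyP/(_ AP)/eqP := cardP A. Qed.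

Lemma card_cells : #|P| = 3.
Proof.
case/andP: (valP p) => partP _; have := card_uniform_partition card_cell partP.
by rewrite cardsT card_ord; lia.
Qed.

Lemma pblock_cell x : pblock P x \in P.
Proof. exact/pblock_mem/mem_cover_cells. Qed.

Lemma mem_pblock_cell x : x \in pblock P x.
Proof. by rewrite mem_pblock mem_cover_cells. Qed.

Lemma cell_pblock A : A \in P -> exists x, A = pblock P x.
Proof.
move=> AP; have /card_gt0P[x xA] : 0 < #|A| by rewrite card_cell.
by exists x; rewrite (def_pblock trivIset_cells AP xA).
Qed.

Lemma pblock_eq x y : (pblock P x == pblock P y) = (y \in pblock P x).
Proof. exact/eq_pblock/mem_cover_cells/trivIset_cells. Qed.

Definition covers (A : {set 'I_9}) : bool := [exists B in P, A \subset B].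

Lemma covers_pair i j : covers [set i; j] = (j \in pblock P i).
Proof.
apply/existsP/idP => [[B /andP[BP]]|jPi].
  rewrite subUset !sub1set => /andP[iB jB].
  by rewrite (def_pblock trivIset_cells BP iB).
by exists (pblock P i); rewrite pblock_cell subUset !sub1set mem_pblock_cell.
Qed.

Definition least_in_block (i : 'I_9) : 'I_9 := [arg min_(j < i in pblock P i) j].

Lemma least_in_blockP i :
  least_in_block i \in pblock P i /\ forall j, j \in pblock P i -> least_in_block i <= j.
Proof. by rewrite /least_in_block; case: arg_minnP => [|j]; rewrite ?mem_pblock_cell. Qed.

Lemma eq_least_in_block i j : (least_in_block i == least_in_block j) = (j \in pblock P i).
Proof.
have [li min_i] := least_in_blockP i; have [lj min_j] := least_in_blockP j.
apply/eqP/idP => [eq_l|jPi]; last first.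
  have eqPij : pblock P j = pblock P i by apply/eqP; rewrite eq_sym pblock_eq.
  by apply/val_inj/anti_leq; rewrite min_i ?min_j ?eqPij // -eqPij.
by rewrite -pblock_eq -(same_pblock trivIset_cells li) eq_l (same_pblock trivIset_cells lj).
Qed.

Definition code : seq nat := [seq val (least_in_block i) | i <- enum 'I_9].

Lemma nth_code k : k < 9 -> nth 0 code k = least_in_block (inord k).
Proof.
by move=> ltk; rewrite (nth_map ord0) ?size_enum_ord // -{1}(inordK ltk) nth_ord_enum.
Qed.

Lemma code_in_codes333 : code \in codes333.
Proof.
have size_code : size code = 9 by rewrite size_map size_enum_ord.
rewrite mem_filter; apply/andP; split.
  apply/allP => i; rewrite mem_iota => /andP[_ lti].
  rewrite nth_code // count_map; apply/eqP.
  rewrite -[RHS](card_cell (pblock_cell (inord i))) -count_enum_ord.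
  by apply: eq_count => j /=; rewrite val_eqE eq_sym eq_least_in_block.
rewrite -size_code; apply: mem_min_labellings => i; rewrite size_code => lti.
have [li min_l] := least_in_blockP (inord i).
rewrite !nth_code ?inord_val //; split.
  by rewrite -[X in _ <= X](inordK lti) min_l ?mem_pblock_cell.
by apply/eqP; rewrite val_eqE eq_sym eq_least_in_block.
Qed.

Definition pair_profile : seq bool := [seq covers [set inord ij.1; inord ij.2] | ij <- pairs9].

Lemma pair_profile_code : pair_profile = profile_of_code code.
Proof.
apply/eq_in_map => ij; rewrite mem_filter => /andP[_ /allpairsP[[i j] [+ + ->]]].
rewrite !mem_iota /= => lti ltj.
by rewrite covers_pair -eq_least_in_block !nth_code.
Qed.

End Partition.

Definition common_pairs (b b' : seq bool) : nat := count (fun xy => xy.1 && xy.2) (zip b b').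

Lemma common_pairs_profile p q :
  common_pairs (pair_profile p) (pair_profile q) =
  \sum_(e : Pair9) covers p (val e) * covers q (val e).
Proof.
rewrite /common_pairs zip_map count_map (sum_Pair9 (fun A => covers p A * covers q A)).
rewrite -sum1_count [LHS]big_mkcond /=.
by apply: eq_bigr => ij _; case: covers; case: covers.
Qed.

Lemma adj333_of_common_pairs0 p q :
  common_pairs (pair_profile p) (pair_profile q) = 0 -> adj333 p q.
Proof.
move/eqP; rewrite common_pairs_profile sum_nat_eq0 => /forallP no_common.
apply/forall_inP => A Ap; apply/forall_inP => B Bq.
have meet_le1 : {in val q, forall B, #|A :&: B| <= 1}.
  move=> B' Bq'; apply/card_le1_eqP => x y /setIP[xA xB'] /setIP[yA yB'].
  apply/eqP/negPn/negP => neq_xy.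
  have two : #|[set x; y]| == 2 by rewrite cards2 (eq_sym x) neq_xy.
  have := no_common (Sub [set x; y] two); rewrite /covers SubK muln_eq0 !eqb0.
  case/orP => /existsP[]; [exists A | exists B'];
    by rewrite ?Ap ?Bq' subUset !sub1set ?xA ?yA ?xB' ?yB'.
have partq : partition (val q) [set: 'I_9] by case/andP: (valP q).
have le_card : #|val q| <= #|A| by rewrite card_cells (card_cell Ap).
have := partition_pigeonhole partq le_card (subsetT A) meet_le1 Bq.
by rewrite -card_gt0 eqn_leq meet_le1.
Qed.

Lemma pair_profile_covers p q : pair_profile p = pair_profile q ->
  forall i j, covers p [set i; j] = covers q [set i; j].
Proof.
move=> /eq_in_map eq_pq i j.
have pairs9_mem (k l : 'I_9) : k < l -> (val k, val l) \in pairs9.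
  move=> lt_kl; rewrite mem_filter; apply/andP; split; first exact: lt_kl.
  by apply/allpairsP; exists (val k, val l); split; rewrite ?mem_iota ?ltn_ord.
case: (ltngtP i j) => [lt_ij | lt_ji | /val_inj <-].
- by have := eq_pq _ (pairs9_mem _ _ lt_ij); rewrite /= !inord_val.
- by have := eq_pq _ (pairs9_mem _ _ lt_ji); rewrite /= !inord_val setUC.
- by rewrite !covers_pair !mem_pblock_cell.
Qed.

Lemma pair_profile_inj : injective pair_profile.
Proof.
move=> p q /pair_profile_covers eq_cov; apply/val_inj/setP => A.
have eq_pblock x : pblock (val p) x = pblock (val q) x.
  by apply/setP => y; rewrite -!covers_pair eq_cov.
apply/idP/idP => [/cell_pblock[x ->] | /cell_pblock[x ->]].
  by rewrite eq_pblock pblock_cell.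
by rewrite -eq_pblock pblock_cell.
Qed.

Section Cliques.
Variables (T : Type) (e : rel T).

Fixpoint cliques (n : nat) : seq T -> seq (seq T) :=
  if n is n'.+1 then
    fix cliques_n (s : seq T) :=
      if s is x :: s' then [seq x :: K | K <- cliques n' [seq y <- s' | e x y]] ++ cliques_n s'
      else [::]
  else fun=> [:: [::]].

End Cliques.

Definition vertices : seq (seq bool) := [seq profile_of_code l | l <- codes333].

Definition no_common_pair (b b' : seq bool) : bool := common_pairs b b' == 0.

Definition cliques4 : seq (seq (seq bool)) := cliques no_common_pair 4 vertices.

Local Open Scope ring_scope.

(* The profile [:: 0; 0; 0; 9] occurs exactly when b is a member of K.  Integer
   constants are written n%:Z: in ring_scope a bare numeral n is the iterated sum
   1 *+ n, which would dominate the vm_compute checks below. *)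
Definition clique_weight (b : seq bool) (K : seq (seq bool)) : int :=
  match sort leq [seq common_pairs b m | m <- K] with
  | [:: 0; 0; 0; 9]%N => - 122%:Z
  | [:: 0; 2; 2; 5]%N => 10%:Z
  | [:: 2; 2; 2; 3]%N => 1%:Z
  | [:: 0; 3; 3; 3]%N => 16%:Z
  | _ => 0
  end.

Lemma cliques4_pairwise : all (fun K => uniq K && pairwise no_common_pair K) cliques4.
Proof. vm_cast_no_check (erefl true). Qed.

Lemma size_cliques4 : size cliques4 = 840%N.
Proof. vm_cast_no_check (erefl 840%N). Qed.

Lemma vertices_in_12_cliques :
  all (fun t => count (fun K => t \in K) cliques4 == 12%N) vertices.
Proof. vm_cast_no_check (erefl true). Qed.

Lemma vertices_common_pairs_self : all (fun b => common_pairs b b == 9%N) vertices.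
Proof. vm_cast_no_check (erefl true). Qed.

Lemma clique_weight_sum :
  all (fun b => foldr +%R 0 [seq clique_weight b K | K <- cliques4] == 3360%:Z) vertices.
Proof. vm_cast_no_check (erefl true). Qed.

(* cliques_t is bound outside the inner loop so that it is computed once per t. *)
Lemma clique_weight_identity :
  all (fun t => let cliques_t := [seq K <- cliques4 | t \in K] in
    all (fun b => 24%:Z * (common_pairs b t)%:Z ==
           1680%:Z *+ (b == t) + foldr +%R 0 [seq clique_weight b K | K <- cliques_t])
      vertices) vertices.
Proof. vm_cast_no_check (erefl true). Qed.

Lemma pair_profile_vertex p : pair_profile p \in vertices.
Proof. by rewrite pair_profile_code map_f // code_in_codes333. Qed.

Definition profiles (S : {set P333}) : seq (seq bool) := [seq pair_profile q | q <- enum S].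

Lemma uniq_profiles (S : {set P333}) : uniq (profiles S).
Proof. by rewrite map_inj_uniq ?enum_uniq //; apply: pair_profile_inj. Qed.

Lemma mem_profiles (S : {set P333}) (p : P333) : (pair_profile p \in profiles S) = (p \in S).
Proof. by rewrite mem_map ?mem_enum //; apply: pair_profile_inj. Qed.

Lemma independent_hits_cliques (S : {set P333}) : independent333 S -> #|S| = 70%N ->
  {in cliques4, forall K, count (mem K) (profiles S) = 1%N}.
Proof.
move=> indS cardS; apply: (@blocks_hit_once _ _ _ 12).
- move=> K /(allP cliques4_pairwise)/andP[uniqK pwK].
  rewrite count_mem_swap ?uniq_profiles //; apply: count_le1_pairwise pwK.
  move=> x y no_xy; apply/negP => /andP[/mapP[q1 + eq1] /mapP[q2 + eq2]].
  rewrite !mem_enum => q1S q2S; move: no_xy; rewrite eq1 eq2 => /eqP/adj333_of_common_pairs0.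
  by have /forall_inP/(_ _ q1S)/forall_inP/(_ _ q2S)/negP := indS.
- by move=> _ /mapP[q _ ->]; apply/eqP/(allP vertices_in_12_cliques)/pair_profile_vertex.
- by rewrite size_cliques4 size_map -cardE cardS.
Qed.

Lemma common_pairs_sum (S : {set P333}) (p : P333) : independent333 S -> #|S| = 70%N ->
  (\sum_(q in S) common_pairs (pair_profile p) (pair_profile q) = 70 * (p \in S) + 140)%N.
Proof.
move=> indS cardS; set b := pair_profile p; have b_vertex := pair_profile_vertex p.
have weight_id : {in profiles S, forall t, 24%:Z * (common_pairs b t)%:Z =
    1680%:Z *+ (b == t) + \sum_(K <- cliques4 | t \in K) clique_weight b K}.
  move=> _ /mapP[q _ ->].
  have /allP/(_ _ (pair_profile_vertex q))/allP/(_ _ b_vertex)/eqP -> := clique_weight_identity.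
  by rewrite foldrE big_map big_filter.
have weight_sum : \sum_(K <- cliques4) clique_weight b K = 3360%:Z.
  by have /allP/(_ _ b_vertex)/eqP := clique_weight_sum; rewrite foldrE big_map.
have := incidence_weight_sum (k := fun t => (common_pairs b t)%:Z) (w := clique_weight b)
  (uniq_profiles S) (independent_hits_cliques indS cardS) weight_id.
rewrite weight_sum mem_profiles big_map big_enum -(big_morph _ PoszD (erefl 0%:Z)).
case: (p \in S); rewrite /= ?mulr1n ?mulr0n ?add0r -PoszM -?PoszD => -[] sum24.
all: by apply/eqP; rewrite -(eqn_pmul2l (isT : (0 < 24)%N)) sum24.
Qed.

Lemma Mpair_gram_indicator (R : nzRingType) (S : {set P333}) (p : P333) :
  \sum_(e : Pair9) Mpair R p e * \sum_(q : P333) Mpair R q e * (q \in S)%:R =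
  (\sum_(q in S) common_pairs (pair_profile p) (pair_profile q))%:R.
Proof.
rewrite (eq_bigr (fun e => \sum_q Mpair R p e * (Mpair R q e * (q \in S)%:R))); last first.
  by move=> e _; rewrite mulr_sumr.
rewrite exchange_big natr_sum [RHS]big_mkcond /=.
apply: eq_bigr => q _; case: (q \in S); last by rewrite big1 // => e _; rewrite !mulr0.
rewrite common_pairs_profile natr_sum; apply: eq_bigr => e _.
by rewrite mulr1 natrM.
Qed.

Lemma Mpair_row_sum (R : nzRingType) p : \sum_(e : Pair9) Mpair R p e = 9.
Proof.
have /allP/(_ _ (pair_profile_vertex p))/eqP := vertices_common_pairs_self.
rewrite common_pairs_profile => sum9; rewrite -[in RHS]sum9 natr_sum; apply: eq_bigr => e _.
by rewrite mulnb andbb.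
Qed.

Lemma in_colspace_of_gram (R : fieldType) (x : P333 -> R) (a c k : R) :
    a != 0 -> k != 0 ->
    (forall p, \sum_(e : Pair9) Mpair R p e * \sum_(q : P333) Mpair R q e * x q = a * x p + c) ->
    (forall p, \sum_(e : Pair9) Mpair R p e = k) ->
  in_colspace x.
Proof.
move=> a0 k0 gram row_sum.
pose Y e := \sum_(q : P333) Mpair R q e * x q.
exists (fun e => (Y e - c / k) / a) => p.
rewrite (eq_bigr (fun e => Mpair R p e * Y e / a - Mpair R p e * (c / k / a))); last first.
  by move=> e _; rewrite mulrBl mulrBr mulrA.
rewrite sumrB -!mulr_suml gram row_sum; field.
by rewrite k0 a0.
Qed.

Theorem corollary4p2 (R : realType) (S : {set P333}) :
  independent333 S -> #|S| = 70%N ->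
  in_colspace (fun p : P333 => ((p \in S) : bool)%:R : R).
Proof.
move=> indS cardS.
apply: (@in_colspace_of_gram _ _ 70 140 9); rewrite ?pnatr_eq0 // => p.
  by rewrite Mpair_gram_indicator common_pairs_sum // natrD natrM.
exact: Mpair_row_sum.
Qed.
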